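(* Let $X$ be a locally finite poset with unique minimal element $0$ which is a complete lattice equipped with a conjugation $x\mapsto\overline{x}$, let $L^+$ be a totally ordered set with bottom $\mathbb{O}$ and top $\mathbb{1}$ equipped with a conjugation $a\mapsto\overline{a}$, let $g:X\to L^+$ be isotone and let $\overline{g}(x):=\overline{g(\overline{x})}$. Then: (i) $\mathscr{C}(\overline{g})=\{\overline{C}: C\in\mathscr{C}(g)\}$, where for $C=\{c_1<\cdots<c_l\}$ one sets $\overline{C}=\{\overline{c_l}<\cdots<\overline{c_1}\}$, and the value of $\overline{C}$ is $\overline{g}(\overline{C})=\overline{g(C)}$; (ii) for every $x\in X$: $m^{\overline{g}}(x)=\mathbb{O}$ if $x$ lies in some $\overline{C}\in\mathscr{C}(\overline{g})$ and $x\ne\overline{C}_*$; $m^{\overline{g}}(x)=\overline{m^g(C_* )}$ if $x=\overline{C}_*$ for some $\overline{C}\in\mathscr{C}(\overline{g})$ (with $C$ the corresponding $g$-chain); and $m^{\overline{g}}(x)=\overline{m^g(\overline{x})}$ otherwise.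
   Context: A conjugation on a lattice is a bijective order-reversing map $a\mapsto\overline{a}$ with $\overline{\overline{a}}=a$. Locally finite: every interval is finite; $y\prec x$ means $x$ covers $y$. For isotone $h:X\to L^+$, its canonical Möbius transform is $m^h(x)=h(x)$ if $h(x)>h(y)$ for all $y\prec x$, and $m^h(x)=\mathbb{O}$ otherwise. An $h$-chain is a chain $C\subseteq X$ with at least two elements on which $h$ is constant and which is maximal for inclusion among chains on which $h$ is constant; its value $h(C)$ is the common value, $C_*$ its minimal element; $\mathscr{C}(h)$ is the set of $h$-chains. Under the present assumptions every $h$-chain is finite. *)

From HB Require Import structures.
From mathcomp Require Import all_boot all_order.
From Stdlib Require Import ClassicalEpsilon.
Set Implicit Arguments. Unset Strict Implicit. Unset Printing Implicit Defensive.
Import Order.TTheory.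
Local Open Scope order_scope.

Section Defs.
Context {dX : Order.disp_t} {X : porderType dX}.

Definition locally_finite : Prop :=
  forall a b : X, exists s : seq X, forall x, a <= x -> x <= b -> x \in s.

Definition minimal (x : X) : Prop := forall y, y <= x -> y = x.

Definition unique_minimal (z : X) : Prop :=
  minimal z /\ forall y, minimal y -> y = z.

Definition is_lub (S : X -> Prop) (u : X) : Prop :=
  (forall x, S x -> x <= u) /\ (forall v, (forall x, S x -> x <= v) -> u <= v).
Definition is_glb (S : X -> Prop) (u : X) : Prop :=
  (forall x, S x -> u <= x) /\ (forall v, (forall x, S x -> v <= x) -> v <= u).

Definition complete_lattice : Prop :=
  forall S : X -> Prop, (exists u, is_lub S u) /\ (exists u, is_glb S u).

Definition covers (y x : X) : Prop := y < x /\ ~ (exists z, y < z /\ z < x).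

Definition is_chain (C : X -> Prop) : Prop :=
  forall x y, C x -> C y -> (x <= y) \/ (y <= x).

Definition is_min (C : X -> Prop) (x : X) : Prop :=
  C x /\ forall y, C y -> x <= y.

Definition img (c : X -> X) (C : X -> Prop) : X -> Prop :=
  fun y => exists x, C x /\ y = c x.

Context {dL : Order.disp_t} {L : tbOrderType dL}.

Definition constant_on (h : X -> L) (C : X -> Prop) : Prop :=
  forall x y, C x -> C y -> h x = h y.

Definition hchain (h : X -> L) (C : X -> Prop) : Prop :=
  [/\ is_chain C,
      (exists x y, C x /\ C y /\ x <> y),
      constant_on h C &
      forall D : X -> Prop, is_chain D -> constant_on h D ->
        (forall x, C x -> D x) -> (forall x, D x -> C x)].

Definition moebius (h : X -> L) (x : X) : L :=
  if excluded_middle_informative (forall y, covers y x -> h y < h x)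
  then h x else \bot.

End Defs.

Definition isotone {dX dL} {X : porderType dX} {L : porderType dL}
  (f : X -> L) : Prop := forall x y, x <= y -> f x <= f y.

Definition conjugation {d} {T : porderType d} (c : T -> T) : Prop :=
  (forall x, c (c x) = x) /\ (forall x y, x <= y -> c y <= c x).

(** The conjugations reverse the order on both sides, so [x |-> cX x] carries chains on
    which [g] is constant to chains on which [gbar] is constant, and maximality is
    preserved; applying the construction twice gives back [g], whence (i).
    [X] is finite, being locally finite with a top and a bottom (the unique minimal element
    plays no further role). So the Möbius transform of an isotone map vanishes at [x]
    exactly when some [y < x] has the same value: a cover of [x] above [y] then has that
    value too. Inside an h-chain this happens everywhere except at the minimum, since a
    smaller element with the same value would enlarge the chain; off every h-chain it never
    happens, since [y < x] with equal values would extend to an h-chain through [x]. *)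
From mathcomp Require Import all_boot all_order zify.
From Stdlib Require Import ClassicalEpsilon Classical FunctionalExtensionality PropExtensionality.
Set Implicit Arguments. Unset Strict Implicit. Unset Printing Implicit Defensive.
Local Open Scope order_scope.
Import Order.TTheory.

Lemma count_lt_subpred (T : eqType) (a1 a2 : pred T) (s : seq T) (w : T) :
  subpred a1 a2 -> w \in s -> a2 w -> ~~ a1 w -> (count a1 s < count a2 s)%N.
Proof.
move=> s12; elim: s => //= x s IHs; rewrite in_cons => /orP [/eqP <-|ws] a2w a1w.
  by rewrite a2w (negbTE a1w) add0n add1n ltnS sub_count.
have := IHs ws a2w a1w; have : (a1 x <= a2 x)%N by case a1x: (a1 x); rewrite // s12.
lia.
Qed.

Lemma bounded_measure_maximal (A : Type) (R : A -> A -> Prop) (f : A -> nat) (N : nat) :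
  (forall a, (f a <= N)%N) -> (forall a b, R a b -> (f a < f b)%N) ->
  (forall a b c, R a b -> R b c -> R a c) ->
  forall a, exists b, (b = a \/ R a b) /\ forall c, ~ R b c.
Proof.
move=> fN Rf Rtr a; move: {2}(N - f a)%N (leqnn (N - f a)) => n.
elim: n a => [|n IHn] a Ha.
  exists a; split; first by left.
  by move=> c /Rf ac; have := fN c; lia.
case: (classic (exists c, R a c)) => [[c ac]|Hmax]; last first.
  by exists a; split; [left | move=> c ac; apply: Hmax; exists c].
have [|b [[->|cb] bmax]] := IHn c.
- by have := Rf _ _ ac; have := fN c; lia.
- by exists c; split; [right|].
- by exists b; split; [right; exact: Rtr cb|].
Qed.

Definition propb (P : Prop) : bool := if excluded_middle_informative P then true else false.

Lemma propbP (P : Prop) : reflect P (propb P).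
Proof. by rewrite /propb; case: excluded_middle_informative => H; constructor. Qed.

Section HChains.
Context {dX : Order.disp_t} {X : porderType dX} {dL : Order.disp_t} {L : tbOrderType dL}.
Implicit Types (h : X -> L) (C D : X -> Prop).

Lemma chain_not_min D x : is_chain D -> D x -> ~ is_min D x -> exists y, D y /\ y < x.
Proof.
move=> Dc Dx nmin; apply: NNPP => noy; apply: nmin; split=> // y Dy.
case: (Dc x y Dx Dy) => // yx; rewrite le_eqVlt in yx.
case/orP: yx => [/eqP -> //|yx]; by case: noy; exists y.
Qed.

Lemma hchain_insert h C c y :
  hchain h C -> C c -> (forall z, C z -> z <= y \/ y <= z) -> h y = h c -> C y.
Proof.
move=> [Cc _ Ck Cmax] Cc0 ycmp hyc.
apply: (Cmax (fun w => C w \/ w = y)); [| |by left|by right].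
- move=> a b [Ca|->] [Cb|->]; first exact: Cc.
  + by case: (ycmp a Ca); [left|right].
  + by case: (ycmp b Cb); [right|left].
  + by left.
- move=> a b [Ca|->] [Cb|->] //; first exact: Ck.
  + by rewrite (Ck a c Ca Cc0).
  + by rewrite (Ck b c Cb Cc0).
Qed.

Lemma hchain_min_neq h C c : hchain h C -> is_min C c -> forall y, y < c -> h y <> h c.
Proof.
move=> HC [Cc cmin] y yc hyc.
have Cy : C y.
  apply: (hchain_insert HC Cc _ hyc) => z /cmin cz.
  by right; exact: le_trans (ltW yc) cz.
by have := lt_le_trans yc (cmin y Cy); rewrite ltxx.
Qed.

Lemma moebius_eq_self h x : isotone h -> (forall y, y < x -> h y <> h x) -> moebius h x = h x.
Proof.
move=> hiso hneq; rewrite /moebius; case: excluded_middle_informative => // Hn.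
exfalso; apply: Hn => y [yx _]; rewrite lt_neqAle hiso ?(ltW yx) // andbT.
by apply/eqP; exact: hneq.
Qed.

Lemma moebius_hchain_min h C c : isotone h -> hchain h C -> is_min C c -> moebius h c = h c.
Proof. by move=> hiso HC cmin; exact: moebius_eq_self (hchain_min_neq HC cmin). Qed.

End HChains.

Lemma conjugation_inj {d} {T : porderType d} (c : T -> T) : conjugation c -> injective c.
Proof. by move=> [cK _] a b e; rewrite -(cK a) e cK. Qed.

Section Conjugation.
Context {dX : Order.disp_t} {X : porderType dX} {dL : Order.disp_t} {L : tbOrderType dL}.
Variables (cX : X -> X) (cL : L -> L).
Hypotheses (conjX : conjugation cX) (conjL : conjugation cL).

Definition dual_map (h : X -> L) : X -> L := fun x => cL (h (cX x)).

Lemma dual_mapK : involutive dual_map.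
Proof.
by move=> h; apply: functional_extensionality => x; rewrite /dual_map conjX.1 conjL.1.
Qed.

Lemma isotone_dual_map h : isotone h -> isotone (dual_map h).
Proof. by move=> hiso x y xy; apply: conjL.2; apply: hiso; exact: conjX.2. Qed.

Lemma img_conjK : involutive (img cX).
Proof.
move=> D; apply: functional_extensionality => x; apply: propositional_extensionality.
split=> [[_ [[y [Dy ->]] ->]]|Dx]; first by rewrite conjX.1.
by exists (cX x); split; [exists x | rewrite conjX.1].
Qed.

Lemma is_chain_img D : is_chain D -> is_chain (img cX D).
Proof.
move=> Dc _ _ [a [Da ->]] [b [Db ->]].
by case: (Dc a b Da Db) => ab; [right|left]; exact: conjX.2.
Qed.

Lemma constant_on_img h D : constant_on h D -> constant_on (dual_map h) (img cX D).
Proof. by move=> Dk _ _ [a [Da ->]] [b [Db ->]]; rewrite /dual_map !conjX.1 (Dk a b). Qed.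

Lemma constant_on_img_dual h E :
  constant_on (dual_map h) E -> constant_on h (img cX E).
Proof.
move=> Ek _ _ [a [Ea ->]] [b [Eb ->]].
by apply: (conjugation_inj conjL); exact: Ek.
Qed.

Lemma hchain_img h D : hchain h D -> hchain (dual_map h) (img cX D).
Proof.
move=> [Dc [a [b [Da [Db ab]]]] Dk Dmax]; split.
- exact: is_chain_img.
- exists (cX a), (cX b); split; [by exists a | split; [by exists b|]].
  by move/(conjugation_inj conjX).
- exact: constant_on_img.
- move=> E Ec Ek DE x Ex; rewrite -[E]img_conjK in Ex.
  case: Ex => y [Ey ->]; exists y; split=> //.
  apply: (Dmax (img cX E)); [exact: is_chain_img|exact: constant_on_img_dual| |done].
  by move=> z Dz; rewrite -[D]img_conjK in Dz; case: Dz => w [/DE Ew ->]; exists w.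
Qed.

Lemma hchain_dual_map h D : hchain (dual_map h) D <-> exists C, hchain h C /\ D = img cX C.
Proof.
split=> [HD|[C [HC ->]]]; last exact: hchain_img.
exists (img cX D); split; last by rewrite img_conjK.
by rewrite -[h]dual_mapK; exact: hchain_img.
Qed.

End Conjugation.

Section FinitePoset.
Context {dX : Order.disp_t} {X : porderType dX} {dL : Order.disp_t} {L : tbOrderType dL}.
Variable enumX : seq X.
Hypothesis enumXP : forall x, x \in enumX.

Lemma count_le_lt (z w : X) : z < w -> (count (<= z) enumX < count (<= w) enumX)%N.
Proof.
move=> zw; apply: (count_lt_subpred (w := w)) => //=.
- by move=> v /= vz; exact: le_trans vz (ltW zw).
- by rewrite lt_geF.
Qed.

Lemma exists_cover_above (d x : X) : d < x -> exists c, covers c x /\ d <= c.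
Proof.
move=> dx.
have [c [dc cmax]] := bounded_measure_maximal (R := fun z w => z < w /\ w < x)
  (f := fun z => count (<= z) enumX) (fun z => count_size _ _)
  (fun z w zw => count_le_lt zw.1)
  (fun a b c ab bc => conj (lt_trans ab.1 bc.1) bc.2) d.
exists c; case: dc => [cd|[dc cx]].
  by subst c; split=> //; split=> // - [z]; apply: cmax.
by split; [split=> // - [z]; apply: cmax | exact: ltW].
Qed.

Lemma exists_hchain_above (h : X -> L) (D : X -> Prop) :
  is_chain D -> constant_on h D -> (exists x y, D x /\ D y /\ x <> y) ->
  exists C, hchain h C /\ forall x, D x -> C x.
Proof.
move=> Dc Dk D2.
pose grows (E F : X -> Prop) :=
  [/\ is_chain F, constant_on h F, forall x, E x -> F x & exists w, F w /\ ~ E w].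
have grows_count E F : grows E F ->
    (count (fun x => propb (E x)) enumX < count (fun x => propb (F x)) enumX)%N.
  case=> _ _ EF [w [Fw nEw]]; apply: (count_lt_subpred (w := w)) => //.
  - by move=> x /propbP /EF /propbP.
  - exact/propbP.
  - exact/propbP.
have grows_trans E F G : grows E F -> grows F G -> grows E G.
  case=> _ _ EF _ [Gc Gk FG [w [Gw nFw]]]; split=> // [x /EF /FG //|].
  by exists w; split=> // /EF.
have [C [DC Cmax]] := bounded_measure_maximal (R := grows)
  (fun E => count_size _ _) grows_count grows_trans D.
have [Cc Ck DsubC] : [/\ is_chain C, constant_on h C & forall x, D x -> C x].
  by case: DC => [->|[]].
exists C; split=> //; split=> //.
- by case: D2 => x [y [Dx [Dy xy]]]; exists x, y; split; [exact: DsubC|split; [exact: DsubC|]].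
- move=> E Ec Ek CE x Ex; apply: NNPP => nCx.
  by apply: (Cmax E); split=> //; exists x.
Qed.

Lemma moebius_eq_bot (h : X -> L) (x y : X) :
  isotone h -> y < x -> h y = h x -> moebius h x = \bot.
Proof.
move=> hiso yx hyx; have [c [cx yc]] := exists_cover_above yx.
rewrite /moebius; case: excluded_middle_informative => // Hcov.
by have := le_lt_trans (hiso _ _ yc) (Hcov c cx); rewrite hyx ltxx.
Qed.

Lemma moebius_notin_hchain (h : X -> L) (x : X) :
  isotone h -> (forall C, hchain h C -> ~ C x) -> moebius h x = h x.
Proof.
move=> hiso notin; apply: moebius_eq_self => // y yx hyx.
pose P w := w = y \/ w = x.
have Pc : is_chain P by move=> a b [->|->] [->|->]; rewrite ?lexx ?(ltW yx); auto.
have Pk : constant_on h P by move=> a b [->|->] [->|->].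
have P2 : exists a b, P a /\ P b /\ a <> b.
  by exists y, x; split; [left|split; [right|apply/eqP; rewrite lt_eqF]].
have [C [HC PC]] := exists_hchain_above Pc Pk P2.
by apply: (notin C HC); apply: PC; right.
Qed.

End FinitePoset.

Lemma complete_lattice_finite {d} {X : porderType d} :
  locally_finite (X := X) -> complete_lattice (X := X) -> exists s : seq X, forall x, x \in s.
Proof.
move=> LF CL; have [[top [topP _]] [bot [botP _]]] := CL (fun _ => True).
have [s sP] := LF bot top; exists s => x; exact: sP (botP x I) (topP x I).
Qed.

Theorem proposition7 (dX : Order.disp_t) (X : porderType dX)
    (dL : Order.disp_t) (L : tbOrderType dL)
    (cX : X -> X) (cL : L -> L) (g : X -> L) (zero : X) :
  @locally_finite _ X -> unique_minimal zero -> @complete_lattice _ X ->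
  conjugation cX -> conjugation cL -> isotone g ->
  let gbar := fun x => cL (g (cX x)) in
  (* (i) *)
  (forall D : X -> Prop, hchain gbar D <-> exists C, hchain g C /\ D = img cX C) /\
  (forall C : X -> Prop, hchain g C ->
     forall x y, img cX C x -> C y -> gbar x = cL (g y)) /\
  (* (ii) *)
  (forall x : X,
     ((exists D, hchain gbar D /\ D x /\ ~ is_min D x) ->
        moebius gbar x = \bot) /\
     (forall C : X -> Prop, hchain g C -> is_min (img cX C) x ->
        forall cs, is_min C cs -> moebius gbar x = cL (moebius g cs)) /\
     (~ (exists D, hchain gbar D /\ D x /\ ~ is_min D x) ->
      ~ (exists D, hchain gbar D /\ is_min D x) ->
        moebius gbar x = cL (moebius g (cX x)))).
Proof.
move=> LF _ CLat conjX conjL giso gbar.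
have [enumX enumXP] := complete_lattice_finite LF CLat.
have gbar_iso : isotone gbar := isotone_dual_map conjX conjL giso.
split; first exact: hchain_dual_map conjX conjL g.
split.
  by move=> C [_ _ Ck _] _ y [c [Cc ->]] Cy; rewrite /gbar conjX.1 (Ck c y).
move=> x; split.
  move=> [D [[Dc _ Dk _] [Dx nmin]]]; have [y [Dy yx]] := chain_not_min Dc Dx nmin.
  exact: (moebius_eq_bot enumXP gbar_iso yx (Dk y x Dy Dx)).
split.
  move=> C HC xmin cs csmin; have [[c [Cc xc]] _] := xmin; subst x.
  rewrite (moebius_hchain_min gbar_iso (hchain_img conjX conjL HC) xmin).
  rewrite (moebius_hchain_min giso HC csmin) /gbar conjX.1.
  by case: HC => _ _ Ck _; rewrite (Ck c cs) //; case: csmin.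
move=> notin_nonmin notin_min.
have notin D : hchain gbar D -> ~ D x.
  move=> HD Dx; case: (classic (is_min D x)) => xmin.
  - by apply: notin_min; exists D.
  - by apply: notin_nonmin; exists D.
rewrite (moebius_notin_hchain enumXP gbar_iso notin).
rewrite (moebius_notin_hchain enumXP giso) // => C HC Cx.
by apply: (notin _ (hchain_img conjX conjL HC)); exists (cX x); rewrite conjX.1.
Qed.
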